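(* Let $X$ be a real Hilbert space, let $A$ be a closed affine subspace of $X$ and $B$ a nonempty closed convex subset of $X$ (with $A\cap B$ possibly empty). Let $g := P_{\overline{B-A}}\,0$ and assume $g\in B-A$, so that $E:=A\cap(B-g)\neq\varnothing$. Let $T := \mathrm{Id}-P_A+P_BR_A$ and let $x\in X$. Then the sequence $(P_A T^n x)_{n\in\mathbb{N}}$ converges weakly to some point in $E$.
   Context: For a nonempty closed convex set $C\subseteq X$, $P_C$ denotes the metric projection onto $C$ and $R_C:=2P_C-\mathrm{Id}$ the reflector. $T=\tfrac12(\mathrm{Id}+R_BR_A)$ is the Douglas–Rachford operator for the ordered pair $(A,B)$. $\overline{B-A}$ is the closure of the Minkowski difference $B-A=\{b-a: a\in A,\ b\in B\}$, so $g$ is its element of minimal norm. *)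

From Stdlib Require Import Reals Lra.
From Stdlib Require Import ClassicalEpsilon.
Open Scope R_scope.

Record HilbertSpace : Type := {
  carrier :> Type;
  hzero : carrier;
  hadd : carrier -> carrier -> carrier;
  hopp : carrier -> carrier;
  hscal : R -> carrier -> carrier;
  hinner : carrier -> carrier -> R;
  hadd_assoc : forall x y z, hadd x (hadd y z) = hadd (hadd x y) z;
  hadd_comm : forall x y, hadd x y = hadd y x;
  hadd_0 : forall x, hadd x hzero = x;
  hadd_opp : forall x, hadd x (hopp x) = hzero;
  hscal_assoc : forall a b x, hscal a (hscal b x) = hscal (a * b) x;
  hscal_1 : forall x, hscal 1 x = x;
  hscal_distr_l : forall a x y, hscal a (hadd x y) = hadd (hscal a x) (hscal a y);
  hscal_distr_r : forall a b x, hscal (a + b) x = hadd (hscal a x) (hscal b x);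
  hinner_sym : forall x y, hinner x y = hinner y x;
  hinner_add_l : forall x y z, hinner (hadd x y) z = hinner x z + hinner y z;
  hinner_scal_l : forall a x y, hinner (hscal a x) y = a * hinner x y;
  hinner_pos : forall x, 0 <= hinner x x;
  hinner_def : forall x, hinner x x = 0 -> x = hzero;
  hcomplete : forall u : nat -> carrier,
    (forall eps, eps > 0 -> exists N, forall m n, (m >= N)%nat -> (n >= N)%nat ->
       sqrt (hinner (hadd (u m) (hopp (u n))) (hadd (u m) (hopp (u n)))) < eps) ->
    exists l, forall eps, eps > 0 -> exists N, forall n, (n >= N)%nat ->
       sqrt (hinner (hadd (u n) (hopp l)) (hadd (u n) (hopp l))) < eps
}.

Arguments hzero {h}.
Arguments hadd {h}.
Arguments hopp {h}.
Arguments hscal {h}.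
Arguments hinner {h}.

Section Hilbert.
Context {X : HilbertSpace}.

Definition hsub (x y : X) : X := hadd x (hopp y).
Definition hnorm (x : X) : R := sqrt (hinner x x).

Definition converges (u : nat -> X) (l : X) : Prop :=
  Un_cv (fun n => hnorm (hsub (u n) l)) 0.
Definition weakly_converges (u : nat -> X) (l : X) : Prop :=
  forall y : X, Un_cv (fun n => hinner (u n) y) (hinner l y).

Definition is_closed (C : X -> Prop) : Prop :=
  forall (u : nat -> X) (l : X), (forall n, C (u n)) -> converges u l -> C l.
Definition is_convex (C : X -> Prop) : Prop :=
  forall x y (t : R), C x -> C y -> 0 <= t <= 1 ->
    C (hadd (hscal t x) (hscal (1 - t) y)).
Definition is_affine (C : X -> Prop) : Prop :=
  forall x y (t : R), C x -> C y -> C (hadd (hscal t x) (hscal (1 - t) y)).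
Definition nonempty (C : X -> Prop) : Prop := exists x, C x.
Definition closure (C : X -> Prop) : X -> Prop :=
  fun l => exists u : nat -> X, (forall n, C (u n)) /\ converges u l.
Definition mdiff (B A : X -> Prop) : X -> Prop :=
  fun z => exists b a, B b /\ A a /\ z = hsub b a.

(* metric projection: the (unique, for nonempty closed convex C) nearest point *)
Definition is_proj (C : X -> Prop) (x p : X) : Prop :=
  C p /\ forall c, C c -> hnorm (hsub x p) <= hnorm (hsub x c).
Definition proj (C : X -> Prop) (x : X) : X :=
  epsilon (inhabits x) (fun p => is_proj C x p).
Definition refl (C : X -> Prop) (x : X) : X :=
  hsub (hscal 2 (proj C x)) x.

Definition DR_op (A B : X -> Prop) (x : X) : X :=
  hadd (hsub x (proj A x)) (proj B (refl A x)).

End Hilbert.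

From Stdlib Require Import Reals Lra Lia SeqProp Classical ClassicalEpsilon.
Open Scope R_scope.

(* T is firmly nonexpansive, and since g is orthogonal to A - A it moves each
   point e + t g (e in E, t >= -1) by exactly g.  Comparing x_n = T^n x with the
   orbit e + n g of a solution gives a Fejer inequality; splitting
   |x_n - (e + n g)|^2 orthogonally as |P_A x_n - e|^2 plus a term V_n that does
   not depend on e shows that |P_A x_n - e|^2 + V_n converges for every e in E,
   and that x_n - x_{n+1} -> -g.  Hence P_A x_n and P_B R_A x_n differ
   asymptotically by -g, and the asymptotic center of any subsequence of
   (P_A x_n) is fixed by P_A and, after the shift by g, by P_B: it lies in E.
   Opial's argument then gives weak convergence to a point of E. *)

Arguments hadd_assoc {h}. Arguments hadd_comm {h}. Arguments hadd_0 {h}.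
Arguments hadd_opp {h}. Arguments hscal_assoc {h}. Arguments hscal_1 {h}.
Arguments hscal_distr_l {h}. Arguments hscal_distr_r {h}. Arguments hinner_sym {h}.
Arguments hinner_add_l {h}. Arguments hinner_scal_l {h}. Arguments hinner_pos {h}.
Arguments hinner_def {h}.

Section InnerProduct.
Context {X : HilbertSpace}.
Implicit Types u v w : X.

Definition nsq u : R := hinner u u.

Lemma hadd_0_l u : hadd hzero u = u.
Proof. rewrite hadd_comm; apply hadd_0. Qed.

Lemma hadd_cancel_l u v w : hadd u v = hadd u w -> v = w.
Proof.
  intro H.
  assert (E : hadd (hopp u) (hadd u v) = hadd (hopp u) (hadd u w)) by now rewrite H.
  rewrite !hadd_assoc, (hadd_comm (hopp u) u), hadd_opp, !hadd_0_l in E.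
  exact E.
Qed.

Lemma hscal_0_l u : hscal 0 u = hzero.
Proof.
  symmetry; apply (hadd_cancel_l (hscal 0 u)).
  rewrite hadd_0, <- hscal_distr_r, Rplus_0_l; reflexivity.
Qed.

Lemma hopp_scal u : hopp u = hscal (-1) u.
Proof.
  apply (hadd_cancel_l u); rewrite hadd_opp.
  rewrite <- (hscal_1 u) at 1; rewrite <- hscal_distr_r, Rplus_opp_r.
  symmetry; apply hscal_0_l.
Qed.

Lemma hinner_add_r u v w : hinner u (hadd v w) = hinner u v + hinner u w.
Proof. rewrite !(hinner_sym u); apply hinner_add_l. Qed.

Lemma hinner_scal_r a u v : hinner u (hscal a v) = a * hinner u v.
Proof. rewrite !(hinner_sym u); apply hinner_scal_l. Qed.

Lemma hinner_0_l u : hinner hzero u = 0.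
Proof. rewrite <- (hscal_0_l hzero), hinner_scal_l; ring. Qed.

Lemma hinner_0_r u : hinner u hzero = 0.
Proof. rewrite hinner_sym; apply hinner_0_l. Qed.

Lemma hinner_opp_l u v : hinner (hopp u) v = - hinner u v.
Proof. rewrite hopp_scal, hinner_scal_l; ring. Qed.

Lemma hinner_opp_r u v : hinner v (hopp u) = - hinner v u.
Proof. rewrite hopp_scal, hinner_scal_r; ring. Qed.

Lemma hsub_eq0 u v : hsub u v = hzero -> u = v.
Proof.
  unfold hsub; intro H.
  rewrite <- (hadd_0 u), <- (hadd_opp v), (hadd_comm v), hadd_assoc, H.
  apply hadd_0_l.
Qed.

Lemma hinner_ext u v : (forall w, hinner u w = hinner v w) -> u = v.
Proof.
  intro H; apply hsub_eq0, hinner_def.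
  unfold hsub at 1; rewrite hinner_add_l, hinner_opp_l, !H; ring.
Qed.

Lemma nsq_ge0 u : 0 <= nsq u.
Proof. apply hinner_pos. Qed.

Lemma nsq_sub_le0 u v : nsq (hsub u v) <= 0 -> u = v.
Proof.
  intro H; apply hsub_eq0, hinner_def.
  pose proof (nsq_ge0 (hsub u v)); unfold nsq in *; lra.
Qed.

End InnerProduct.

Global Hint Rewrite @hinner_add_l @hinner_add_r @hinner_scal_l @hinner_scal_r
  @hinner_opp_l @hinner_opp_r @hinner_0_l @hinner_0_r : inner.

Ltac inner_expand := unfold hsub, nsq in *; autorewrite with inner in *.

Ltac add_inner_sym u v :=
  lazymatch goal with
  | _ : hinner u v = hinner v u |- _ => fail
  | _ : hinner v u = hinner u v |- _ => fail
  | _ => pose proof (hinner_sym u v)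
  end.

(* Records [hinner u v = hinner v u] for every inner product in sight, so that
   [lra]/[nra] can treat inner products as commutative atoms. *)
Ltac inner_sym_facts :=
  repeat match goal with
  | |- context [hinner ?u ?v] => add_inner_sym u v
  | _ : context [hinner ?u ?v] |- _ => add_inner_sym u v
  end.

Ltac vec_eq :=
  apply hinner_ext; let w := fresh "w" in intro w;
  unfold hsub, refl, DR_op in *; autorewrite with inner; first [ring | field].

Section Geometry.
Context {X : HilbertSpace}.
Implicit Types u v w : X.

Lemma nsq_add u v : nsq (hadd u v) = nsq u + 2 * hinner u v + nsq v.
Proof. inner_expand; inner_sym_facts; lra. Qed.

Lemma nsq_sub u v : nsq (hsub u v) = nsq u - 2 * hinner u v + nsq v.
Proof. inner_expand; inner_sym_facts; lra. Qed.

Lemma nsq_opp u : nsq (hscal (-1) u) = nsq u.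
Proof. inner_expand; ring. Qed.

Lemma nsq_sub_scal u w t :
  nsq (hsub u (hscal t w)) = nsq u - 2 * t * hinner u w + t * t * nsq w.
Proof. inner_expand; rewrite (hinner_sym w u); ring. Qed.

Lemma two_hinner_le u v eta : eta > 0 -> 2 * hinner u v <= eta * nsq u + / eta * nsq v.
Proof.
  intro he.
  assert (H := nsq_ge0 (hsub (hscal eta u) v)).
  inner_expand; rewrite (hinner_sym v u) in H.
  apply (Rmult_le_reg_l eta); [exact he|].
  replace (eta * (eta * hinner u u + / eta * hinner v v))
    with (eta * eta * hinner u u + hinner v v) by (field; lra).
  nra.
Qed.

Lemma nsq_add_le u v eta : eta > 0 ->
  nsq (hadd u v) <= (1 + eta) * nsq u + (1 + / eta) * nsq v.
Proof. intro he; rewrite nsq_add; pose proof (two_hinner_le u v eta he); lra. Qed.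

Definition midpoint u v : X := hadd (hscal (1/2) u) (hscal (1 - 1/2) v).

Lemma nsq_sub_midpoint w u v :
  nsq (hsub w (midpoint u v))
  = /2 * nsq (hsub w u) + /2 * nsq (hsub w v) - /4 * nsq (hsub u v).
Proof.
  unfold midpoint; inner_expand.
  rewrite (hinner_sym u w), (hinner_sym v w), (hinner_sym v u); field.
Qed.

End Geometry.

Lemma INR_inv_eventually_lt eps : eps > 0 ->
  exists N, forall n, (n >= N)%nat -> / (INR n + 1) < eps.
Proof.
  intro He; destruct (archimed_cor1 eps He) as [N [HN HN0]]; exists N; intros n Hn.
  apply Rle_lt_trans with (/ INR N); [|exact HN].
  apply Rinv_le_contravar; [apply lt_0_INR; lia|].
  apply le_INR in Hn; lra.
Qed.

Lemma Rle_of_le_add_mul (q a k : R) : (forall t, 0 < t <= 1 -> q <= a + t * k) -> q <= a.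
Proof.
  intro H; destruct (Rle_lt_dec q a) as [h|h]; [exact h|].
  destruct (Rle_lt_dec k 0) as [hk|hk]; [specialize (H 1); nra|].
  set (t := Rmin 1 ((q - a) / (2 * k))).
  assert (ht1 : t <= 1) by apply Rmin_l.
  assert (ht2 : t <= (q - a) / (2 * k)) by apply Rmin_r.
  assert (ht0 : 0 < t).
  { unfold t, Rmin; destruct (Rle_dec 1 ((q - a) / (2 * k))); [lra|].
    apply Rdiv_lt_0_compat; lra. }
  specialize (H t (conj ht0 ht1)).
  assert (t * k <= (q - a) / 2).
  { apply Rle_trans with ((q - a) / (2 * k) * k); [apply Rmult_le_compat_r; lra|].
    right; field; lra. }
  lra.
Qed.

Lemma Rinf_approx (D : R -> Prop) : (exists r, D r) -> (forall r, D r -> 0 <= r) ->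
  exists d, 0 <= d /\ (forall r, D r -> d <= r) /\
    (forall e, e > 0 -> exists r, D r /\ r < d + e).
Proof.
  intros [r0 h0] hpos.
  destruct (completeness (fun q => D (- q))) as [m [Hm1 Hm2]].
  { exists 0; intros q hq; specialize (hpos _ hq); lra. }
  { exists (- r0); rewrite Ropp_involutive; exact h0. }
  exists (- m); repeat split.
  - assert (m <= 0); [apply Hm2; intros q hq; specialize (hpos _ hq); lra | lra].
  - intros r hr; assert (- r <= m) by (apply Hm1; rewrite Ropp_involutive; exact hr); lra.
  - intros e he; apply NNPP; intro hn.
    assert (m <= m - e); [|lra].
    apply Hm2; intros q hq; apply Rnot_lt_le; intro hlt.
    apply hn; exists (- q); split; [exact hq | lra].
Qed.

Lemma Un_cv_le_eventually (f : nat -> R) l a : Un_cv f l ->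
  (forall eps, eps > 0 -> exists N, forall n, (n >= N)%nat -> f n <= a + eps) -> l <= a.
Proof.
  intros hf hb; apply Rnot_lt_le; intro hl.
  destruct (hf ((l - a) / 2)) as [N1 H1]; [lra|].
  destruct (hb ((l - a) / 2)) as [N2 H2]; [lra|].
  specialize (H1 (max N1 N2) ltac:(lia)); specialize (H2 (max N1 N2) ltac:(lia)).
  unfold Rdist in H1; apply Rabs_def2 in H1; lra.
Qed.

Lemma Un_cv_ge_lb (f : nat -> R) l a : Un_cv f l -> (forall n, a <= f n) -> a <= l.
Proof.
  intros hf hb; apply Rnot_lt_le; intro hl.
  destruct (hf ((a - l) / 2)) as [N H]; [lra|].
  specialize (H N (le_n N)); specialize (hb N).
  unfold Rdist in H; apply Rabs_def2 in H; lra.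
Qed.

Lemma Un_cv_squeeze_0 (f h : nat -> R) :
  (forall n, 0 <= f n <= h n) -> Un_cv h 0 -> Un_cv f 0.
Proof.
  intros hfh hh eps he; destruct (hh eps he) as [N HN]; exists N; intros n hn.
  specialize (HN n hn); specialize (hfh n); unfold Rdist in *.
  rewrite Rminus_0_r in *; rewrite Rabs_pos_eq in * by lra; lra.
Qed.

Lemma sqrt_lt_iff q e : 0 <= q -> 0 < e -> (sqrt q < e <-> q < e * e).
Proof.
  intros hq he; split; intro h.
  - apply sqrt_lt_0_alt; rewrite sqrt_square by lra; exact h.
  - rewrite <- (sqrt_square e) by lra; apply sqrt_lt_1; nra.
Qed.

Lemma Un_cv_sqrt_0 (f : nat -> R) : (forall n, 0 <= f n) ->
  (Un_cv (fun n => sqrt (f n)) 0 <-> Un_cv f 0).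
Proof.
  unfold Un_cv, Rdist; intro hf; split; intros H eps he.
  - destruct (H (sqrt eps) (sqrt_lt_R0 _ he)) as [N HN]; exists N; intros n hn.
    specialize (HN n hn); rewrite Rminus_0_r, Rabs_pos_eq in * by (auto; apply sqrt_pos).
    apply sqrt_lt_0_alt; exact HN.
  - destruct (H (eps * eps)) as [N HN]; [nra|]; exists N; intros n hn.
    specialize (HN n hn); rewrite Rminus_0_r, Rabs_pos_eq in * by (auto; apply sqrt_pos).
    apply sqrt_lt_iff; auto.
Qed.

Section Limits.
Context {X : HilbertSpace}.
Implicit Types w : X.

Lemma converges_nsq (s : nat -> X) l :
  converges s l <-> Un_cv (fun n => nsq (hsub (s n) l)) 0.
Proof. apply Un_cv_sqrt_0; intro n; apply nsq_ge0. Qed.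

Lemma complete_nsq (s : nat -> X) :
  (forall eps, eps > 0 -> exists N, forall m n, (m >= N)%nat -> (n >= N)%nat ->
     nsq (hsub (s m) (s n)) < eps) ->
  exists l, Un_cv (fun n => nsq (hsub (s n) l)) 0.
Proof.
  intro H; destruct (hcomplete X s) as [l Hl].
  - intros eps he; destruct (H (eps * eps)) as [N HN]; [nra|]; exists N; intros m n hm hn.
    apply sqrt_lt_iff; [apply hinner_pos|lra|]; apply HN; auto.
  - exists l; apply converges_nsq; intros eps he.
    destruct (Hl eps he) as [N HN]; exists N; intros n hn; specialize (HN n hn).
    unfold Rdist; rewrite Rminus_0_r, Rabs_pos_eq by apply sqrt_pos; exact HN.
Qed.

Lemma complete_nsq_of_bound (s : nat -> X) :
  (forall k j, nsq (hsub (s k) (s j)) <= 2 * / (INR k + 1) + 2 * / (INR j + 1)) ->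
  exists l, Un_cv (fun n => nsq (hsub (s n) l)) 0.
Proof.
  intro hb; apply complete_nsq; intros eps he.
  destruct (INR_inv_eventually_lt (eps / 4)) as [N HN]; [lra|].
  exists N; intros k j hk hj.
  pose proof (HN k hk); pose proof (HN j hj); specialize (hb k j); lra.
Qed.

Lemma Un_cv_nsq_sub (s : nat -> X) (k : X) w :
  Un_cv (fun n => nsq (hsub (s n) k)) 0 ->
  Un_cv (fun n => nsq (hsub w (s n))) (nsq (hsub w k)).
Proof.
  intros hs eps he.
  set (M := nsq (hsub w k)).
  assert (hM : 0 <= M) by apply nsq_ge0.
  set (eta := eps / (2 * (M + 1))).
  assert (heta : eta > 0) by (apply Rdiv_lt_0_compat; lra).
  destruct (hs (eps / (2 * (/ eta + 1)))) as [N HN].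
  { apply Rdiv_lt_0_compat; [lra|]; pose proof (Rinv_0_lt_compat eta heta); lra. }
  exists N; intros n hn; specialize (HN n hn).
  set (d := hsub (s n) k) in *.
  assert (hd0 : 0 <= nsq d) by apply nsq_ge0.
  unfold Rdist in *; rewrite Rminus_0_r, Rabs_pos_eq in HN by exact hd0.
  replace (hsub w (s n)) with (hsub (hsub w k) d) by (unfold d; vec_eq).
  rewrite nsq_sub; fold M.
  assert (h1 := two_hinner_le (hsub w k) d eta heta).
  assert (h2 := two_hinner_le (hsub w k) (hscal (-1) d) eta heta).
  rewrite hinner_scal_r, nsq_opp in h2; fold M in h1, h2.
  assert (hie : / eta > 0) by (apply Rinv_0_lt_compat; exact heta).
  assert (hb : (/ eta + 1) * nsq d < eps / 2).
  { apply Rlt_le_trans with ((/ eta + 1) * (eps / (2 * (/ eta + 1)))).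
    - apply Rmult_lt_compat_l; [lra | exact HN].
    - right; field; lra. }
  assert (hm : eta * M < eps / 2).
  { replace (eps / 2) with (eta * (M + 1)) by (unfold eta; field; lra); nra. }
  apply Rabs_def1; nra.
Qed.

End Limits.

Section Projection.
Context {X : HilbertSpace} (C : X -> Prop).
Hypotheses (hC_conv : is_convex C) (hC_ne : nonempty C).
Implicit Types u v w : X.

Lemma closure_incl c : C c -> closure C c.
Proof.
  intro h; exists (fun _ => c); split; [auto|].
  apply converges_nsq; intros eps he; exists O; intros n _.
  replace (hsub c c) with (@hzero X) by vec_eq.
  unfold nsq, Rdist; rewrite hinner_0_l, Rminus_0_r, Rabs_R0; lra.
Qed.

Lemma hnorm_le_iff u v : hnorm u <= hnorm v <-> nsq u <= nsq v.
Proof.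
  split; intro h; [apply sqrt_le_0 | apply sqrt_le_1]; auto; apply hinner_pos.
Qed.

(* A minimising sequence is Cauchy by the parallelogram law; its limit is the
   nearest point of the closure. *)
Lemma nearest_in_closure_exists w :
  exists p, closure C p /\ forall c, closure C c -> nsq (hsub w p) <= nsq (hsub w c).
Proof.
  destruct (Rinf_approx (fun r => exists c, C c /\ r = nsq (hsub w c)))
    as [d [_ [hd_lb hd_inf]]].
  { destruct hC_ne as [c0 hc0]; exists (nsq (hsub w c0)), c0; auto. }
  { intros r [c [_ ->]]; apply nsq_ge0. }
  set (cs := fun n : nat => epsilon (inhabits w)
                 (fun c => C c /\ nsq (hsub w c) < d + / (INR n + 1))).
  assert (hcs : forall n, C (cs n) /\ nsq (hsub w (cs n)) < d + / (INR n + 1)).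
  { intro n; apply epsilon_spec.
    destruct (hd_inf _ (RinvN_pos n)) as [r [[c [hc ->]] hr]]; exists c; auto. }
  destruct (complete_nsq_of_bound cs) as [p hp].
  { intros n k; destruct (hcs n) as [h1 h2]; destruct (hcs k) as [h3 h4].
    pose proof (nsq_sub_midpoint w (cs n) (cs k)).
    assert (d <= nsq (hsub w (midpoint (cs n) (cs k))))
      by (apply hd_lb; exists (midpoint (cs n) (cs k));
          split; [apply hC_conv; auto; lra | reflexivity]).
    lra. }
  exists p; split.
  - exists cs; split; [intro n; apply hcs | apply converges_nsq, hp].
  - intros c [v [hv hvc]]; apply converges_nsq in hvc.
    apply Rle_trans with d.
    + apply (Un_cv_le_eventually _ _ d (Un_cv_nsq_sub cs p w hp)).
      intros e he; destruct (INR_inv_eventually_lt e he) as [N HN].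
      exists N; intros n hn; specialize (HN n hn); destruct (hcs n); lra.
    + apply (Un_cv_ge_lb _ _ d (Un_cv_nsq_sub v c w hvc)); intro n.
      apply hd_lb; exists (v n); auto.
Qed.

Lemma proj_closure_spec w : is_proj (closure C) w (proj (closure C) w).
Proof.
  unfold proj; apply epsilon_spec.
  destruct (nearest_in_closure_exists w) as [p [hp hmin]].
  exists p; split; [exact hp|]; intros c hc; apply hnorm_le_iff, hmin, hc.
Qed.

Lemma nearest_variational w p : C p ->
  (forall c, C c -> nsq (hsub w p) <= nsq (hsub w c)) ->
  forall c, C c -> hinner (hsub w p) (hsub c p) <= 0.
Proof.
  intros hp hmin c hc.
  apply (Rle_of_le_add_mul _ 0 (nsq (hsub c p) / 2)); intros t ht.
  assert (hct : C (hadd (hscal t c) (hscal (1 - t) p))) by (apply hC_conv; auto; lra).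
  specialize (hmin _ hct).
  replace (hsub w (hadd (hscal t c) (hscal (1 - t) p)))
    with (hsub (hsub w p) (hscal t (hsub c p))) in hmin by vec_eq.
  rewrite nsq_sub_scal in hmin.
  assert (t * (2 * hinner (hsub w p) (hsub c p)) <= t * (t * nsq (hsub c p))) by lra.
  apply Rmult_le_reg_l in H; lra.
Qed.

Hypothesis hC_cl : is_closed C.

Lemma proj_spec w : is_proj C w (proj C w).
Proof.
  unfold proj; apply epsilon_spec.
  destruct (nearest_in_closure_exists w) as [p [[s [hs hsp]] hmin]].
  exists p; split; [exact (hC_cl s p hs hsp)|].
  intros c hc; apply hnorm_le_iff, hmin, closure_incl, hc.
Qed.

Lemma proj_variational w :
  C (proj C w) /\ forall c, C c -> hinner (hsub w (proj C w)) (hsub c (proj C w)) <= 0.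
Proof.
  destruct (proj_spec w) as [hp hmin]; split; [exact hp|].
  apply nearest_variational; [exact hp|]; intros c hc; apply hnorm_le_iff, hmin, hc.
Qed.

Lemma proj_unique w p : C p ->
  (forall c, C c -> hinner (hsub w p) (hsub c p) <= 0) -> proj C w = p.
Proof.
  intros hp hv; destruct (proj_variational w) as [hq hvq].
  specialize (hvq p hp); specialize (hv _ hq).
  apply nsq_sub_le0; inner_expand; inner_sym_facts; lra.
Qed.

Lemma proj_closer u c : C c -> nsq (hsub c (proj C u)) <= nsq (hsub c u).
Proof.
  intro hc; destruct (proj_variational u) as [_ hv]; specialize (hv c hc).
  pose proof (nsq_ge0 (hsub (proj C u) u)).
  inner_expand; inner_sym_facts; lra.
Qed.

End Projection.

Definition infinite (S : nat -> Prop) : Prop := forall N, exists n, (n >= N)%nat /\ S n.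

Lemma infinite_all : infinite (fun _ => True).
Proof. intro N; exists N; split; auto. Qed.

Lemma not_infinite_eventually (S : nat -> Prop) :
  ~ infinite S -> exists N, forall n, (n >= N)%nat -> ~ S n.
Proof.
  intro hS; apply NNPP; intro hN; apply hS; intro N.
  apply NNPP; intro hn; apply hN; exists N; intros n hge hs; apply hn; exists n; auto.
Qed.

Section AsymptoticCenter.
Context {X : HilbertSpace} (s : nat -> X).
Implicit Types w c : X.

Definition asymp_radius_le (S : nat -> Prop) w (r : R) : Prop :=
  forall eps, eps > 0 -> exists N, forall n, (n >= N)%nat -> S n ->
    nsq (hsub (s n) w) <= r + eps.

Definition is_asymp_center (S : nat -> Prop) c (r : R) : Prop :=
  asymp_radius_le S c r /\ forall w r', asymp_radius_le S w r' -> r <= r'.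

Variable S : nat -> Prop.

Lemma asymp_radius_le_weaken w r r' :
  asymp_radius_le S w r -> r <= r' -> asymp_radius_le S w r'.
Proof.
  intros h hr eps he; destruct (h eps he) as [N HN]; exists N; intros n hn hs.
  specialize (HN n hn hs); lra.
Qed.

Lemma asymp_radius_le_ge0 w r : infinite S -> asymp_radius_le S w r -> 0 <= r.
Proof.
  intros hi h; apply (Rle_of_le_add_mul 0 r 1); intros t ht.
  destruct (h t) as [N HN]; [lra|]; destruct (hi N) as [n [h1 h2]].
  specialize (HN n h1 h2); pose proof (nsq_ge0 (hsub (s n) w)); lra.
Qed.

Lemma asymp_radius_le_of_gt w r :
  (forall e, e > 0 -> asymp_radius_le S w (r + e)) -> asymp_radius_le S w r.
Proof.
  intros h eps he; destruct (h (eps / 2) ltac:(lra) (eps / 2) ltac:(lra)) as [N HN].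
  exists N; intros n hn hs; specialize (HN n hn hs); lra.
Qed.

Lemma asymp_radius_le_midpoint w1 w2 r1 r2 :
  asymp_radius_le S w1 r1 -> asymp_radius_le S w2 r2 ->
  asymp_radius_le S (midpoint w1 w2) (/2 * r1 + /2 * r2 - /4 * nsq (hsub w1 w2)).
Proof.
  intros h1 h2 eps he; destruct (h1 eps he) as [N1 H1]; destruct (h2 eps he) as [N2 H2].
  exists (max N1 N2); intros n hn hs; rewrite nsq_sub_midpoint.
  specialize (H1 n ltac:(lia) hs); specialize (H2 n ltac:(lia) hs); lra.
Qed.

Lemma asymp_radius_le_shift w w' r D :
  asymp_radius_le S w r ->
  Un_cv (fun n => nsq (hsub (s n) w') - nsq (hsub (s n) w)) D ->
  asymp_radius_le S w' (r + D).
Proof.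
  intros h hD eps he; destruct (h (eps / 2) ltac:(lra)) as [N1 H1].
  destruct (hD (eps / 2) ltac:(lra)) as [N2 H2].
  exists (max N1 N2); intros n hn hs.
  specialize (H1 n ltac:(lia) hs); specialize (H2 n ltac:(lia)).
  unfold Rdist in H2; apply Rabs_def2 in H2; lra.
Qed.

Lemma asymp_radius_le_move w c r eta : eta > 0 -> asymp_radius_le S w r ->
  asymp_radius_le S c ((1 + eta) * r + (1 + / eta) * nsq (hsub w c)).
Proof.
  intros he h eps hep; destruct (h (eps / (1 + eta))) as [N HN].
  { apply Rdiv_lt_0_compat; lra. }
  exists N; intros n hn hs; specialize (HN n hn hs).
  replace (hsub (s n) c) with (hadd (hsub (s n) w) (hsub w c)) by vec_eq.
  eapply Rle_trans; [apply nsq_add_le, he|].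
  assert (h1 : (1 + eta) * nsq (hsub (s n) w) <= (1 + eta) * (r + eps / (1 + eta)))
    by (apply Rmult_le_compat_l; lra).
  replace ((1 + eta) * (r + eps / (1 + eta))) with ((1 + eta) * r + eps) in h1
    by (field; lra).
  lra.
Qed.

Lemma asymp_radius_le_limit (ws : nat -> X) c r : 0 <= r ->
  (forall k, asymp_radius_le S (ws k) (r + / (INR k + 1))) ->
  Un_cv (fun k => nsq (hsub (ws k) c)) 0 -> asymp_radius_le S c r.
Proof.
  intros hr hws hc; apply asymp_radius_le_of_gt; intros e he.
  set (eta := e / (3 * (r + 1))).
  assert (heta : eta > 0) by (apply Rdiv_lt_0_compat; lra).
  assert (hie : / eta > 0) by (apply Rinv_0_lt_compat; lra).
  destruct (INR_inv_eventually_lt (e / (3 * (1 + eta)))) as [N1 H1].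
  { apply Rdiv_lt_0_compat; lra. }
  destruct (hc (e / (3 * (1 + / eta)))) as [N2 H2].
  { apply Rdiv_lt_0_compat; lra. }
  set (k := max N1 N2); specialize (H1 k ltac:(lia)); specialize (H2 k ltac:(lia)).
  unfold Rdist in H2; rewrite Rminus_0_r, Rabs_pos_eq in H2 by apply nsq_ge0.
  eapply asymp_radius_le_weaken; [apply (asymp_radius_le_move (ws k) c _ eta heta (hws k))|].
  assert (a1 : (1 + eta) * / (INR k + 1) <= (1 + eta) * (e / (3 * (1 + eta))))
    by (apply Rmult_le_compat_l; lra).
  assert (a2 : (1 + / eta) * nsq (hsub (ws k) c) <= (1 + / eta) * (e / (3 * (1 + / eta))))
    by (apply Rmult_le_compat_l; lra).
  replace ((1 + eta) * (e / (3 * (1 + eta)))) with (e / 3) in a1 by (field; lra).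
  replace ((1 + / eta) * (e / (3 * (1 + / eta)))) with (e / 3) in a2 by (field; lra).
  assert (a3 : eta * r <= e / 3).
  { replace (e / 3) with (eta * (r + 1)) by (unfold eta; field; lra); nra. }
  nra.
Qed.

(* As for nearest points: near-optimal centers form a Cauchy sequence by the
   parallelogram law. *)
Lemma asymp_center_exists : infinite S -> (exists w r, asymp_radius_le S w r) ->
  exists c r, is_asymp_center S c r.
Proof.
  intros hi [w0 [r0 h0]].
  destruct (Rinf_approx (fun r => exists w, asymp_radius_le S w r))
    as [rho [hrho [hmin happ]]].
  { exists r0, w0; exact h0. }
  { intros r [w h]; exact (asymp_radius_le_ge0 w r hi h). }
  set (ws := fun k : nat => epsilon (inhabits w0)
                 (fun w => asymp_radius_le S w (rho + / (INR k + 1)))).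
  assert (hws : forall k, asymp_radius_le S (ws k) (rho + / (INR k + 1))).
  { intro k; apply epsilon_spec.
    destruct (happ _ (RinvN_pos k)) as [r [[w hw] hr]].
    exists w; apply (asymp_radius_le_weaken w r); [exact hw | lra]. }
  destruct (complete_nsq_of_bound ws) as [c hc].
  { intros k j.
    assert (h := hmin _ (ex_intro (fun w => asymp_radius_le S w _) _
                           (asymp_radius_le_midpoint _ _ _ _ (hws k) (hws j)))).
    lra. }
  exists c, rho; split.
  - exact (asymp_radius_le_limit ws c rho hrho hws hc).
  - intros w r h; apply hmin; exists w; exact h.
Qed.

Lemma asymp_center_unique c w r :
  is_asymp_center S c r -> asymp_radius_le S w r -> w = c.
Proof.
  intros [hc hmin] hw.
  pose proof (hmin _ _ (asymp_radius_le_midpoint _ _ _ _ hw hc)).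
  apply nsq_sub_le0; lra.
Qed.

Lemma asymp_radius_le_proj (C : X -> Prop) w r :
  is_convex C -> nonempty C -> is_closed C -> (forall n, S n -> C (s n)) ->
  asymp_radius_le S w r -> asymp_radius_le S (proj C w) r.
Proof.
  intros hconv hne hcl hC h eps he; destruct (h eps he) as [N HN].
  exists N; intros n hn hs; eapply Rle_trans; [|apply (HN n hn hs)].
  apply proj_closer; auto.
Qed.

Lemma asymp_radius_le_toward c r y eps :
  asymp_radius_le S c r -> eps > 0 -> nsq y > 0 ->
  (forall n, S n -> eps <= hinner (hsub (s n) c) y) ->
  asymp_radius_le S (hadd c (hscal (eps / nsq y) y)) (r - eps * eps / nsq y).
Proof.
  intros h he hy hS e hep; destruct (h e hep) as [N HN]; exists N; intros n hn hs.
  specialize (HN n hn hs); specialize (hS n hs).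
  set (t := eps / nsq y).
  assert (ht : 0 <= t) by (apply Rlt_le, Rdiv_lt_0_compat; lra).
  replace (hsub (s n) (hadd c (hscal t y))) with (hsub (hsub (s n) c) (hscal t y)) by vec_eq.
  rewrite nsq_sub_scal.
  replace (t * t * nsq y) with (eps * eps / nsq y) by (unfold t; field; lra).
  replace (eps * eps / nsq y) with (t * eps) by (unfold t; field; lra).
  assert (t * eps <= t * hinner (hsub (s n) c) y) by (apply Rmult_le_compat_l; lra).
  lra.
Qed.

Lemma asymp_center_not_in_halfspace c r y eps :
  is_asymp_center S c r -> infinite S -> eps > 0 ->
  ~ (forall n, S n -> eps <= hinner (hsub (s n) c) y).
Proof.
  intros [hc hmin] hi he hS.
  assert (hy : nsq y > 0).
  { apply Rnot_le_lt; intro hy.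
    assert (y = hzero) by (apply nsq_sub_le0; inner_expand; lra).
    destruct (hi O) as [n [_ hn]]; specialize (hS n hn); subst y; rewrite hinner_0_r in hS; lra. }
  pose proof (hmin _ _ (asymp_radius_le_toward c r y eps hc he hy hS)).
  assert (0 < eps * eps / nsq y) by (apply Rdiv_lt_0_compat; nra).
  lra.
Qed.

End AsymptoticCenter.

Lemma asymp_radius_le_perturb {X : HilbertSpace} (s t : nat -> X) S c w r :
  asymp_radius_le s S c r ->
  Un_cv (fun n => nsq (hsub (hsub (t n) w) (hsub (s n) c))) 0 ->
  asymp_radius_le t S w r.
Proof.
  intros h hd eps he.
  set (eta := eps / (2 * (Rabs r + 1))).
  assert (heta : eta > 0) by (apply Rdiv_lt_0_compat; [lra | pose proof (Rabs_pos r); lra]).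
  assert (hie : / eta > 0) by (apply Rinv_0_lt_compat; lra).
  destruct (h (eps / (4 * (1 + eta)))) as [N1 H1]; [apply Rdiv_lt_0_compat; lra|].
  destruct (hd (eps / (4 * (1 + / eta)))) as [N2 H2]; [apply Rdiv_lt_0_compat; lra|].
  exists (max N1 N2); intros n hn hS.
  specialize (H1 n ltac:(lia) hS); specialize (H2 n ltac:(lia)).
  unfold Rdist in H2; rewrite Rminus_0_r, Rabs_pos_eq in H2 by apply nsq_ge0.
  replace (hsub (t n) w) with (hadd (hsub (s n) c) (hsub (hsub (t n) w) (hsub (s n) c)))
    by vec_eq.
  eapply Rle_trans; [apply nsq_add_le, heta|].
  assert (a1 : (1 + eta) * nsq (hsub (s n) c) <= (1 + eta) * (r + eps / (4 * (1 + eta))))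
    by (apply Rmult_le_compat_l; lra).
  assert (a2 : (1 + / eta) * nsq (hsub (hsub (t n) w) (hsub (s n) c))
               <= (1 + / eta) * (eps / (4 * (1 + / eta))))
    by (apply Rmult_le_compat_l; lra).
  replace ((1 + eta) * (r + eps / (4 * (1 + eta)))) with (r + eta * r + eps / 4) in a1
    by (field; lra).
  replace ((1 + / eta) * (eps / (4 * (1 + / eta)))) with (eps / 4) in a2 by (field; lra).
  assert (a3 : eta * r <= eps / 2).
  { replace (eps / 2) with (eta * (Rabs r + 1))
      by (unfold eta; field; pose proof (Rabs_pos r); lra).
    pose proof (Rle_abs r); nra. }
  lra.
Qed.

(* Opial's argument, with asymptotic centers in place of weak compactness. *)
Section Opial.
Context {X : HilbertSpace} (s : nat -> X) (V : nat -> R) (E : X -> Prop).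
Hypothesis hV : forall n, 0 <= V n.
Hypothesis hfejer : forall e, E e -> exists l, Un_cv (fun n => nsq (hsub (s n) e) + V n) l.
Hypothesis hcenter : forall S c r, infinite S -> is_asymp_center s S c r -> E c.
Hypothesis hE : nonempty E.

Lemma asymp_radius_bounded S : exists w r, asymp_radius_le s S w r.
Proof.
  destruct hE as [e he]; destruct (hfejer e he) as [l hl].
  destruct (maj_by_pos _ (exist _ l hl)) as [M [_ hM]].
  exists e, M; intros eps hep; exists O; intros n _ _.
  specialize (hM n); specialize (hV n); pose proof (Rle_abs (nsq (hsub (s n) e) + V n)); lra.
Qed.

Lemma nsq_sub_diff_cv c c' : E c -> E c' ->
  exists D, Un_cv (fun n => nsq (hsub (s n) c') - nsq (hsub (s n) c)) D.
Proof.
  intros hc hc'; destruct (hfejer c hc) as [l hl]; destruct (hfejer c' hc') as [l' hl'].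
  exists (l' - l); eapply Un_cv_ext; [|exact (CV_minus _ _ _ _ hl' hl)].
  intro n; simpl; ring.
Qed.

(* The asymptotic center along [S] lies in [E] too, so the squared distances to it
   and to the global center differ by a convergent sequence; this forces the two
   centers to coincide, against [asymp_center_not_in_halfspace]. *)
Lemma asymp_center_halfspace_finite c r y eps :
  is_asymp_center s (fun _ => True) c r -> eps > 0 ->
  ~ infinite (fun n => eps <= hinner (hsub (s n) c) y).
Proof.
  intros hc he hi; set (S := fun n => eps <= hinner (hsub (s n) c) y) in hi.
  assert (hEc : E c) by exact (hcenter _ _ _ infinite_all hc).
  destruct (asymp_center_exists s S hi (asymp_radius_bounded S)) as [c' [r' hc']].
  assert (hEc' : E c') by exact (hcenter _ _ _ hi hc').
  destruct (nsq_sub_diff_cv c c' hEc hEc') as [D hD].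
  assert (hD0 : 0 <= D).
  { pose proof (proj2 hc _ _ (asymp_radius_le_shift _ _ _ _ _ _ (proj1 hc) hD)); lra. }
  assert (hcS : asymp_radius_le s S c r').
  { apply (asymp_radius_le_weaken s S c (r' + - D)); [|lra].
    apply (asymp_radius_le_shift s S c' c r' (- D) (proj1 hc')).
    eapply Un_cv_ext; [|exact (CV_opp _ _ hD)]; intro n; unfold opp_seq; ring. }
  rewrite <- (asymp_center_unique s S c' c r' hc' hcS) in hc'.
  exact (asymp_center_not_in_halfspace s S c r' y eps hc' hi he (fun n h => h)).
Qed.

Lemma weak_cv_of_fejer_centers : exists z, E z /\ weakly_converges s z.
Proof.
  destruct (asymp_center_exists s _ infinite_all (asymp_radius_bounded _)) as [c [r hc]].
  exists c; split; [exact (hcenter _ _ _ infinite_all hc)|].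
  intros y eps he.
  destruct (not_infinite_eventually _ (asymp_center_halfspace_finite c r y eps hc he))
    as [N1 H1].
  destruct (not_infinite_eventually _
              (asymp_center_halfspace_finite c r (hscal (-1) y) eps hc he)) as [N2 H2].
  exists (max N1 N2); intros n hn.
  specialize (H1 n ltac:(lia)); specialize (H2 n ltac:(lia)).
  unfold Rdist; apply Rabs_def1; inner_expand; lra.
Qed.

End Opial.

Section AffineSets.
Context {X : HilbertSpace}.
Implicit Types w : X.

Lemma affine_convex (C : X -> Prop) : is_affine C -> is_convex C.
Proof. intros hC u v t hu hv _; apply hC; auto. Qed.

Lemma mdiff_convex (A B : X -> Prop) :
  is_convex A -> is_convex B -> is_convex (mdiff B A).
Proof.
  intros hA hB z1 z2 t [b1 [a1 [hb1 [ha1 ->]]]] [b2 [a2 [hb2 [ha2 ->]]]] ht.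
  exists (hadd (hscal t b1) (hscal (1 - t) b2)), (hadd (hscal t a1) (hscal (1 - t) a2)).
  repeat split; [apply hB | apply hA | vec_eq]; auto.
Qed.

Lemma affine_add_scal_sub (A : X -> Prop) a0 a1 a2 t : is_affine A ->
  A a0 -> A a1 -> A a2 -> A (hadd a0 (hscal t (hsub a1 a2))).
Proof.
  intros hA h0 h1 h2.
  set (m := hadd (hscal (1/2) a0) (hscal (1 - 1/2) (hadd (hscal t a1) (hscal (1 - t) a2)))).
  assert (hm : A m) by (apply hA; [|apply hA]; auto).
  replace (hadd a0 (hscal t (hsub a1 a2))) with (hadd (hscal 2 m) (hscal (1 - 2) a2))
    by (unfold m; vec_eq).
  apply hA; auto.
Qed.

Lemma proj_affine_orth (A : X -> Prop) w :
  is_affine A -> nonempty A -> is_closed A ->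
  A (proj A w) /\ forall a, A a -> hinner (hsub w (proj A w)) (hsub a (proj A w)) = 0.
Proof.
  intros hA hne hcl.
  destruct (proj_variational A (affine_convex A hA) hne hcl w) as [hp hv].
  split; [exact hp|]; intros a ha; apply Rle_antisym; [apply hv, ha|].
  set (p := proj A w) in *.
  specialize (hv _ (hA p a 2 hp ha)).
  replace (hsub (hadd (hscal 2 p) (hscal (1 - 2) a)) p) with (hscal (-1) (hsub a p)) in hv
    by vec_eq.
  rewrite hinner_scal_r in hv; lra.
Qed.

Lemma proj0_closure_variational (C : X -> Prop) : is_convex C ->
  C (proj (closure C) hzero) ->
  forall c, C c -> 0 <= hinner (proj (closure C) hzero) (hsub c (proj (closure C) hzero)).
Proof.
  intros hconv hp c hc.
  set (p := proj (closure C) hzero) in *.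
  destruct (proj_closure_spec C hconv (ex_intro _ p hp) hzero) as [_ hmin].
  assert (H : hinner (hsub hzero p) (hsub c p) <= 0).
  { apply (nearest_variational C hconv hzero p hp); [|exact hc].
    intros c' hc'; apply hnorm_le_iff, hmin, closure_incl, hc'. }
  unfold hsub at 1 in H; rewrite hinner_add_l, hinner_0_l, hinner_opp_l in H; lra.
Qed.

End AffineSets.

Section DouglasRachford.
Context {X : HilbertSpace} (A B : X -> Prop).
Hypotheses (hA_ne : nonempty A) (hA_aff : is_affine A) (hA_cl : is_closed A)
  (hB_ne : nonempty B) (hB_conv : is_convex B) (hB_cl : is_closed B).
Implicit Types u v w : X.

Lemma DR_op_firmly_nonexpansive u v :
  nsq (hsub (DR_op A B u) (DR_op A B v))
  + nsq (hsub (hsub u (DR_op A B u)) (hsub v (DR_op A B v))) <= nsq (hsub u v).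
Proof.
  unfold DR_op, refl.
  destruct (proj_affine_orth A u hA_aff hA_ne hA_cl) as [hp hpu].
  destruct (proj_affine_orth A v hA_aff hA_ne hA_cl) as [hp' hpv].
  set (p := proj A u) in *; set (p' := proj A v) in *.
  specialize (hpu p' hp'); specialize (hpv p hp).
  destruct (proj_variational B hB_conv hB_ne hB_cl (hsub (hscal 2 p) u)) as [hq hqu].
  destruct (proj_variational B hB_conv hB_ne hB_cl (hsub (hscal 2 p') v)) as [hq' hqv].
  set (q := proj B (hsub (hscal 2 p) u)) in *; set (q' := proj B (hsub (hscal 2 p') v)) in *.
  specialize (hqu q' hq'); specialize (hqv q hq).
  inner_expand; inner_sym_facts; lra.
Qed.

Local Notation g := (proj (closure (mdiff B A)) hzero).
Hypothesis hg : mdiff B A g.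

Lemma gap_orth a1 a2 : A a1 -> A a2 -> hinner g (hsub a1 a2) = 0.
Proof.
  intros h1 h2; destruct hg as [b0 [a0 [hb0 [ha0 Hg]]]].
  assert (key : forall t, 0 <= - t * hinner g (hsub a1 a2)).
  { intro t.
    pose proof (proj0_closure_variational _ (mdiff_convex A B (affine_convex A hA_aff) hB_conv)
                  hg (hsub b0 (hadd a0 (hscal t (hsub a1 a2))))) as H.
    replace (hsub (hsub b0 (hadd a0 (hscal t (hsub a1 a2)))) g)
      with (hscal (- t) (hsub a1 a2)) in H by (rewrite Hg; vec_eq).
    rewrite hinner_scal_r in H; apply H.
    exists b0, (hadd a0 (hscal t (hsub a1 a2))).
    repeat split; auto; apply affine_add_scal_sub; auto. }
  pose proof (key 1); pose proof (key (-1)); lra.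
Qed.

Lemma solution_set_nonempty : exists e, A e /\ B (hadd e g).
Proof.
  destruct hg as [b0 [a0 [hb0 [ha0 Hg]]]]; exists a0; split; [exact ha0|].
  rewrite Hg; replace (hadd a0 (hsub b0 a0)) with b0 by vec_eq; exact hb0.
Qed.

Lemma proj_A_add_gap e t : A e -> proj A (hadd e (hscal t g)) = e.
Proof.
  intro he; apply proj_unique; auto using affine_convex; intros c hc.
  replace (hsub (hadd e (hscal t g)) e) with (hscal t g) by vec_eq.
  rewrite hinner_scal_l, gap_orth; auto; lra.
Qed.

Lemma proj_B_sub_gap e t : A e -> B (hadd e g) -> 0 <= t + 1 ->
  proj B (hsub e (hscal t g)) = hadd e g.
Proof.
  intros he heg ht; apply proj_unique; auto; intros c hc.
  replace (hsub (hsub e (hscal t g)) (hadd e g)) with (hscal (- (t + 1)) g) by vec_eq.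
  replace (hsub c (hadd e g)) with (hsub (hsub c e) g) by vec_eq.
  rewrite hinner_scal_l.
  assert (0 <= hinner g (hsub (hsub c e) g)).
  { apply proj0_closure_variational; [apply mdiff_convex; auto using affine_convex | exact hg |].
    exists c, e; auto. }
  nra.
Qed.

Lemma DR_op_add_gap e t : A e -> B (hadd e g) -> -1 <= t ->
  DR_op A B (hadd e (hscal t g)) = hadd e (hscal (t + 1) g).
Proof.
  intros he heg ht; unfold DR_op, refl; rewrite proj_A_add_gap by exact he.
  replace (hsub (hscal 2 e) (hadd e (hscal t g))) with (hsub e (hscal t g)) by vec_eq.
  rewrite proj_B_sub_gap by (auto; lra); vec_eq.
Qed.

Variable x : X.

Definition DR_iter (n : nat) : X := Nat.iter n (DR_op A B) x.
Definition shadow (n : nat) : X := proj A (DR_iter n).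
Definition DR_step (n : nat) : X := hsub (DR_iter n) (DR_iter (S n)).

(* For a solution [e], [e + n g] is the [T]-orbit of [e] (by [DR_op_add_gap]). *)
Definition fejer_dist (e : X) (n : nat) : R :=
  nsq (hsub (DR_iter n) (hadd e (hscal (INR n) g))).
Definition shadow_defect (n : nat) : R :=
  nsq (hsub (hsub (DR_iter n) (shadow n)) (hscal (INR n) g)).

Lemma shadow_eq n : shadow n = hadd (proj B (refl A (DR_iter n))) (DR_step n).
Proof. unfold shadow, DR_step; simpl; unfold DR_op; vec_eq. Qed.

Lemma fejer_dist_step e n : A e -> B (hadd e g) ->
  fejer_dist e (S n) + nsq (hadd (DR_step n) g) <= fejer_dist e n.
Proof.
  intros he heg; unfold fejer_dist.
  pose proof (DR_op_firmly_nonexpansive (DR_iter n) (hadd e (hscal (INR n) g))) as H.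
  rewrite DR_op_add_gap in H by (auto; pose proof (pos_INR n); lra).
  rewrite S_INR.
  replace (hsub (hsub (DR_iter n) (DR_op A B (DR_iter n)))
             (hsub (hadd e (hscal (INR n) g)) (hadd e (hscal (INR n + 1) g))))
    with (hadd (DR_step n) g) in H by (unfold DR_step; simpl; vec_eq).
  exact H.
Qed.

Lemma fejer_dist_decomp e n : A e ->
  fejer_dist e n = nsq (hsub (shadow n) e) + shadow_defect n.
Proof.
  intro he; unfold fejer_dist, shadow_defect.
  destruct (proj_affine_orth A (DR_iter n) hA_aff hA_ne hA_cl) as [ha hv].
  specialize (hv e he); fold (shadow n) in ha, hv.
  pose proof (gap_orth (shadow n) e ha he) as hp.
  replace (hsub (DR_iter n) (hadd e (hscal (INR n) g)))
    with (hadd (hsub (shadow n) e) (hsub (hsub (DR_iter n) (shadow n)) (hscal (INR n) g)))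
    by vec_eq.
  rewrite nsq_add; inner_expand; inner_sym_facts; nra.
Qed.

Lemma fejer_dist_cv e : A e -> B (hadd e g) -> exists l, Un_cv (fejer_dist e) l.
Proof.
  intros he heg; destruct (decreasing_cv (fejer_dist e)) as [l hl].
  - intro n; pose proof (fejer_dist_step e n he heg); pose proof (nsq_ge0 (hadd (DR_step n) g)).
    lra.
  - exists 0; intros r [n ->]; unfold opp_seq, fejer_dist.
    pose proof (nsq_ge0 (hsub (DR_iter n) (hadd e (hscal (INR n) g)))); lra.
  - exists l; exact hl.
Qed.

Lemma shadow_fejer_cv e : A e -> B (hadd e g) ->
  exists l, Un_cv (fun n => nsq (hsub (shadow n) e) + shadow_defect n) l.
Proof.
  intros he heg; destruct (fejer_dist_cv e he heg) as [l hl]; exists l.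
  eapply Un_cv_ext; [|exact hl]; intro n; apply fejer_dist_decomp, he.
Qed.

Lemma DR_step_add_gap_cv0 : Un_cv (fun n => nsq (hadd (DR_step n) g)) 0.
Proof.
  destruct solution_set_nonempty as [e [he heg]].
  destruct (fejer_dist_cv e he heg) as [l hl].
  apply (Un_cv_squeeze_0 _ (fun n => fejer_dist e n - fejer_dist e (n + 1)%nat)).
  - intro n; split; [apply nsq_ge0|].
    rewrite Nat.add_1_r; pose proof (fejer_dist_step e n he heg); lra.
  - replace 0 with (l - l) by ring; apply CV_minus; [exact hl | apply CV_shift', hl].
Qed.

(* [shadow n] and [proj B (R_A x_n)] differ by [DR_step n], which tends to [-g];
   so asymptotic centers transfer between the two sequences up to a shift by [g],
   and projecting a center onto [A] or [B] cannot increase its radius. *)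
Lemma asymp_center_solution S c r : is_asymp_center shadow S c r -> A c /\ B (hadd c g).
Proof.
  intros hc.
  set (b := fun n => proj B (refl A (DR_iter n))).
  assert (hAc : A c).
  { rewrite <- (asymp_center_unique shadow S c (proj A c) r hc).
    - apply (proj_affine_orth A c hA_aff hA_ne hA_cl).
    - apply asymp_radius_le_proj; auto using affine_convex; [|apply hc].
      intros n _; apply (proj_affine_orth A _ hA_aff hA_ne hA_cl). }
  split; [exact hAc|].
  assert (hb : asymp_radius_le b S (hadd c g) r).
  { apply (asymp_radius_le_perturb shadow b S c _ r (proj1 hc)).
    eapply Un_cv_ext; [|exact DR_step_add_gap_cv0]; intro n.
    rewrite <- nsq_opp; apply (f_equal nsq); rewrite shadow_eq; unfold b; vec_eq. }
  set (p := proj B (hadd c g)).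
  assert (hbp : asymp_radius_le b S p r).
  { apply asymp_radius_le_proj; auto; intros n _; apply (proj_variational B); auto. }
  assert (hap : asymp_radius_le shadow S (hsub p g) r).
  { apply (asymp_radius_le_perturb b shadow S p _ r hbp).
    eapply Un_cv_ext; [|exact DR_step_add_gap_cv0]; intro n.
    apply (f_equal nsq); rewrite shadow_eq; unfold b; vec_eq. }
  rewrite <- (asymp_center_unique shadow S c _ r hc hap).
  replace (hadd (hsub p g) g) with p by vec_eq.
  apply (proj_variational B); auto.
Qed.

End DouglasRachford.

Theorem theorem2p3 (X : HilbertSpace) (A B : X -> Prop)
  (hA_ne : nonempty A) (hA_aff : is_affine A) (hA_cl : is_closed A)
  (hB_ne : nonempty B) (hB_conv : is_convex B) (hB_cl : is_closed B)
  (hg : mdiff B A (proj (closure (mdiff B A)) hzero))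
  (x : X) :
  let g := proj (closure (mdiff B A)) hzero in
  let E := fun z => A z /\ B (hadd z g) in
  exists z, E z /\
    weakly_converges (fun n => proj A (Nat.iter n (DR_op A B) x)) z.
Proof.
  intros g E.
  apply (weak_cv_of_fejer_centers (shadow A B x) (shadow_defect A B x) E).
  - intro n; apply nsq_ge0.
  - intros e [he heg]; apply shadow_fejer_cv; assumption.
  - intros S c r _ hc; eapply asymp_center_solution; eassumption.
  - apply solution_set_nonempty; assumption.
Qed.
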